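(* Let $(X,d)$ be a metric space, $\mu$ a Borel probability measure on $X$ with no atoms, and $T:X\to X$ a measurable map preserving $\mu$. (i) Suppose that every decreasing sequence of balls $B(y,r_1)\supseteq B(y,r_2)\supseteq\cdots$ in $X$ with a common center $y$ and with $\sum_n\mu(B(y,r_n))=\infty$ satisfies $\mu(\limsup_n T^{-n}B(y,r_n))=1$. Then for every $y\in X$, $$\liminf_{r\to 0}\frac{\log\tau_{B(y,r)}(x)}{-\log\mu(B(y,r))}=1\quad\text{for }\mu\text{-a.e. }x.$$ (ii) Let $B(y,r)=\{x: d(x,y)\le r\}$ denote the closed ball. Suppose that every decreasing sequence of closed balls $A_n=B(y,r_n)$ with a common center $y$ and with $\sum_n\mu(A_n)=\infty$ is strongly Borel–Cantelli. Then for every $y\in X$, $$\lim_{r\to 0}\frac{\log\tau_{B(y,r)}(x)}{-\log\mu(B(y,r))}=1\quad\text{for }\mu\text{-a.e. }x.$$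
   Context: $\tau_A(x)=\min\{n\in\mathbf N: T^n(x)\in A\}$ (with $\tau_A(x)=\infty$ if no such $n$). $\limsup_n S_n$ denotes the set of points belonging to infinitely many $S_n$. A sequence of sets $A_n\subseteq X$ is strongly Borel–Cantelli (SBC) if for $\mu$-a.e. $x$, $\frac{\sum_{n=1}^N 1_{T^{-n}A_n}(x)}{\sum_{n=1}^N\mu(A_n)}\to 1$ as $N\to\infty$, where $1_A$ is the indicator function of $A$. *)

From HB Require Import structures.
From mathcomp Require Import all_boot all_order all_algebra.
From mathcomp Require Import all_classical all_reals all_analysis.
Set Implicit Arguments. Unset Strict Implicit. Unset Printing Implicit Defensive.
Import Order.TTheory GRing.Theory Num.Theory.
Import numFieldNormedType.Exports.
Local Open Scope classical_set_scope.
Local Open Scope ring_scope.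

Section Defs.
Context {R : realType} {X : Type}.

Definition is_metric (dist : X -> X -> R) : Prop :=
  [/\ (forall x y, 0 <= dist x y),
      (forall x y, dist x y = 0 <-> x = y),
      (forall x y, dist x y = dist y x) &
      (forall x y z, dist x z <= dist x y + dist y z)].

Definition oball (dist : X -> X -> R) (y : X) (r : R) : set X :=
  [set x | dist x y < r].
Definition cball (dist : X -> X -> R) (y : X) (r : R) : set X :=
  [set x | dist x y <= r].

Definition metric_open (dist : X -> X -> R) (A : set X) : Prop :=
  forall x, A x -> exists2 e : R, 0 < e & oball dist x e `<=` A.

(* limsup_n T^{-n} A_n, with A_n := A (n-1) for n >= 1 *)
Definition limsup_preim (T : X -> X) (A : nat -> set X) : set X :=
  [set x | forall m : nat, exists k : nat, (m <= k)%N /\ A k (iter k.+1 T x)].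

(* tau_A(x) = min {n >= 1 : T^n x \in A}, +oo if no such n *)
Definition hitting_time (T : X -> X) (A : set X) (x : X) : \bar R :=
  ereal_inf [set (n%:R)%:E | n in [set n : nat | (0 < n)%N /\ A (iter n T x)]].
End Defs.

Section MeasDefs.
Context {d : measure_display} {R : realType} {X : measurableType d}.

Definition hratio (T : X -> X) (mu : {measure set X -> \bar R}) (A : set X)
    (x : X) : \bar R :=
  match hitting_time T A x with
  | EFin t => (ln t / - ln (fine (mu A)))%:E
  | _ => +oo%E
  end.

(* strongly Borel-Cantelli; A_n := A (n-1) for n >= 1:
   (sum_{n=1}^N 1_{T^{-n} A_n}(x)) / (sum_{n=1}^N mu(A_n)) --> 1 a.e. *)
Definition SBC (T : X -> X) (mu : {measure set X -> \bar R})
    (A : nat -> set X) : Prop :=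
  {ae mu, forall x,
    (fun N : nat =>
       (\sum_(k < N) (asbool (A k (iter k.+1 T x)))%:R) /
       (\sum_(k < N) fine (mu (A k)))) @ \oo --> (1 : R)}.
End MeasDefs.

From HB Require Import structures.
From mathcomp Require Import all_boot all_order all_algebra.
From mathcomp Require Import all_classical all_reals all_analysis.
From mathcomp Require Import ring lra.
Set Implicit Arguments. Unset Strict Implicit. Unset Printing Implicit Defensive.
Import Order.TTheory GRing.Theory Num.Theory.
Import numFieldNormedType.Exports.
Local Open Scope classical_set_scope.
Local Open Scope ring_scope.

(* For (i) and (ii) alike, the bound liminf >= 1 comes from Borel-Cantelli.
   Take the scales th_k = 2^-((k+1)(q+1)). By invariance, the points that
   enter within 2^((k+1)q) steps the union of all balls of measure <= th_k
   form a set of measure <= 2^-(k+1). So almost every x eventually avoids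
   these sets, and then log tau / -log mu(B) >= (q-1)/(q+1) for small radii.
   The upper bounds use radii that stay constant on long blocks of times,
   with the block lengths chosen so that the sum of mu(B(y, r_k)) diverges.
   In (i), once B(y, r_k) is visited at a time k of block j, the hitting
   time is at most N_(j+1), and the radii shrink fast enough that this is
   about mu(B)^-(1+1/q); the limsup hypothesis gives such visits for
   arbitrarily small radii. In (ii), the radii are the thresholds where
   mu(B(y,.)) crosses 3^-((j+1)q), and each block carries more than twice
   the expected number of visits of all earlier blocks together. The SBC
   ratio can only stay close to 1 if every late block contains a visit,
   and this bounds the hitting time of every small ball. Letting q go to
   infinity gives the result. *)

Section hitting_time.
Context {R : realType} {X : Type} (T : X -> X) (A : set X) (x : X).

Lemma hitting_time_ge1 : (1%:E <= @hitting_time R X T A x)%E.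
Proof.
apply: le_ereal_inf_tmp => _ [n [n0 _] <-].
by rewrite lee_fin ler1n.
Qed.

Lemma hitting_time_le n : (0 < n)%N -> A (iter n T x) ->
  exists2 t : R, @hitting_time R X T A x = t%:E & 1 <= t <= n%:R.
Proof.
move=> n0 An.
have : (@hitting_time R X T A x <= n%:R%:E)%E by apply: ereal_inf_lbound; exists n.
move: hitting_time_ge1; case: (hitting_time T A x) => [t| |] //= t1 tn.
by exists t => //; rewrite -!lee_fin t1 tn.
Qed.

Lemma hitting_time_ge n : (forall k, (0 < k)%N -> (k < n)%N -> ~ A (iter k T x)) ->
  (n%:R%:E <= @hitting_time R X T A x)%E.
Proof.
move=> nohit; apply: le_ereal_inf_tmp => _ [k [k0 Ak] <-].
rewrite lee_fin ler_nat leqNgt; apply/negP => kn; exact: nohit k k0 kn Ak.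
Qed.

End hitting_time.

Section hitting_ratio.
Context {d : measure_display} {R : realType} {X : measurableType d}.
Variables (T : X -> X) (mu : {measure set X -> \bar R}) (A : set X) (x : X).
Hypothesis muA01 : 0 < fine (mu A) < 1.

Let oppr_ln_muA_gt0 : 0 < - ln (fine (mu A)).
Proof. by case/andP: muA01 => muA0 muA1; rewrite oppr_gt0 ln_lt0 // muA0. Qed.

Lemma hratio_le n c : (0 < n)%N -> A (iter n T x) ->
  ln n%:R <= c * - ln (fine (mu A)) -> (hratio T mu A x <= c%:E)%E.
Proof.
move=> n0 An lnn; rewrite /hratio; have [t -> /andP[t1 tn]] := @hitting_time_le R _ T A x n n0 An.
rewrite lee_fin ler_pdivrMr //; apply: le_trans lnn.
by rewrite ler_ln ?posrE ?ltr0n // (lt_le_trans ltr01).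
Qed.

Lemma hratio_ge n c : (0 < n)%N ->
  (forall k, (0 < k)%N -> (k < n)%N -> ~ A (iter k T x)) ->
  c * - ln (fine (mu A)) <= ln n%:R -> (c%:E <= hratio T mu A x)%E.
Proof.
move=> n0 nohit lnn; have := @hitting_time_ge R _ T A x n nohit.
rewrite /hratio; case: (hitting_time T A x) => [t| |] //= nt; last by rewrite leey.
rewrite lee_fin in nt; rewrite lee_fin ler_pdivlMr //; apply: le_trans lnn _.
by rewrite ler_ln ?posrE ?ltr0n // (lt_le_trans _ nt) ?ltr0n.
Qed.

End hitting_ratio.

Section blocks.
Variable N : nat -> nat.
Hypothesis N0 : N 0 = 0%N.
Hypothesis N_ltS : forall j, (N j < N j.+1)%N.

Fixpoint block (k : nat) : nat :=
  if k is k'.+1 then (if (N (block k').+1 <= k)%N then (block k').+1 else block k')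
  else 0%N.

Let N_homo : {homo N : i j / (i <= j)%N}.
Proof.
exact: (@homo_leq _ N (fun a b => (a <= b)%N) leqnn (fun _ _ _ => @leq_trans _ _ _)
  (fun j => ltnW (N_ltS j))).
Qed.

Lemma leq_block_start j : (j <= N j)%N.
Proof. by elim: j => // j IH; exact: leq_ltn_trans IH (N_ltS j). Qed.

Lemma block_bounds k : (N (block k) <= k < N (block k).+1)%N.
Proof.
elim: k => [|k /andP[lb ub]] /=; first by rewrite N0 (leq_ltn_trans (leq0n _) (N_ltS 0)).
case: ifP => Nk; last by rewrite (leq_trans lb) // ltnNge Nk.
have eqk : N (block k).+1 = k.+1 by apply/eqP; rewrite eqn_leq Nk ub.
by rewrite eqk leqnn -eqk N_ltS.
Qed.

Lemma blockE j k : (N j <= k < N j.+1)%N -> block k = j.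
Proof.
case/andP=> lb ub; have /andP[lb' ub'] := block_bounds k.
case: (ltngtP (block k) j) => // [lt_kj|lt_jk].
- by move: (leq_trans (N_homo lt_kj) lb); rewrite leqNgt ub'.
- by move: (leq_trans (N_homo lt_jk) lb'); rewrite leqNgt ub.
Qed.

Lemma block_ge j k : (N j <= k)%N -> (j <= block k)%N.
Proof.
move=> Njk; rewrite leqNgt; apply/negP => /N_homo lt_kj.
by have /andP[_ ub] := block_bounds k; move: (leq_trans lt_kj Njk); rewrite leqNgt ub.
Qed.

Lemma block_homo : {homo block : k l / (k <= l)%N}.
Proof.
by move=> k l kl; apply: block_ge; case/andP: (block_bounds k) => lb _; exact: leq_trans kl.
Qed.

Lemma sum_block_recr {R : nmodType} (c : nat -> R) j :
  \sum_(0 <= k < N j.+1) c (block k) =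
  \sum_(0 <= k < N j) c (block k) + c j *+ (N j.+1 - N j).
Proof.
rewrite (@big_cat_nat _ _ _ (N j)) //=; last exact: ltnW.
congr (_ + _); rewrite (eq_big_nat _ _ (F2 := fun=> c j)) ?sumr_const_nat //.
by move=> k /blockE ->.
Qed.

End blocks.

Section iterates.
Context {d : measure_display} {R : realType} {X : measurableType d}.
Variables (mu : {measure set X -> \bar R}) (T : X -> X).
Hypothesis mT : measurable_fun setT T.

Let preimage_iterS n A : iter n.+1 T @^-1` A = iter n T @^-1` (T @^-1` A).
Proof. by apply/seteqP; split => x. Qed.

Lemma measurable_preimage_iter n A : measurable A -> measurable (iter n T @^-1` A).
Proof.
elim: n A => [|n IH] A mA //; rewrite preimage_iterS.
by apply: (IH (T @^-1` A)); rewrite -[_ @^-1` _]setTI; exact: mT.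
Qed.

Hypothesis T_preserving : forall A, measurable A -> mu (T @^-1` A) = mu A.

Lemma measure_preimage_iter n A : measurable A -> mu (iter n T @^-1` A) = mu A.
Proof.
elim: n A => [|n IH] A mA //; rewrite preimage_iterS.
by rewrite (IH (T @^-1` A)) ?T_preserving // -[_ @^-1` _]setTI; exact: mT.
Qed.

End iterates.

Lemma ae_eventually_notin {d : measure_display} {R : realType} {X : measurableType d}
    (mu : {measure set X -> \bar R}) (E : nat -> set X) :
  (forall k, measurable (E k)) -> (forall k, (mu (E k) <= ((2 ^ k.+1)%:R^-1)%:E)%E) ->
  {ae mu, forall x, \forall k \near \oo, ~ E k x}.
Proof.
move=> mE muE; exists (lim_sup_set E); split.
- by apply: bigcap_measurable => // n _; exact: bigcup_measurable.
- apply: lim_sup_set_cvg0 => //; apply: (@le_lt_trans _ _ 1%E); last exact: ltry.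
  apply: le_trans (lee_nneseries (fun k _ _ => measure_ge0 _ _) (fun k _ => muE k)) _.
  have := @cvg_geometric_eseries_half R 1 0; rewrite expr0 divr1.
  rewrite (_ : (fun k => _) = fun k => ((2 ^ k.+1)%:R^-1)%:E).
    by move=> /cvg_lim <-.
  by apply/funext => k; rewrite addn1 div1r.
- move=> x /= notev n _; apply: contrapT => notE; apply: notev.
  by exists n => // k /= nk Ekx; apply: notE; exists k.
Qed.

Lemma exists_crossing (P : nat -> Prop) K n : (K <= n)%N -> ~ P K -> P n ->
  exists2 k, (K <= k)%N & ~ P k /\ P k.+1.
Proof.
move=> /subnK <-; elim: (n - K)%N => [|i IH] notPK; first by rewrite add0n.
rewrite addSn => Pi; have [Pi'|notPi'] := pselect (P (i + K)%N); first exact: IH.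
by exists (i + K)%N; rewrite ?leq_addl.
Qed.

Section limits.
Context {R : realType}.

Lemma cvge_ub (u : nat -> \bar R) l c : u @ \oo --> l ->
  (forall n, (u n <= c)%E) -> (l <= c)%E.
Proof.
move=> ul uc; rewrite -(cvg_lim _ ul) //; apply: lime_le; first exact: cvgP ul.
exact: nearW.
Qed.

Lemma cvge_lb (u : nat -> \bar R) l c : u @ \oo --> l ->
  (forall n, (c <= u n)%E) -> (c <= l)%E.
Proof.
move=> ul uc; rewrite -(cvg_lim _ ul) //; apply: lime_ge; first exact: cvgP ul.
exact: nearW.
Qed.

Lemma near_right0P (P : R -> Prop) : (\forall r \near 0^'+, P r) <->
  exists2 e : R, 0 < e & forall r, 0 < r -> r < e -> P r.
Proof.
split=> [/nbhs_ballP[e e0 eP]|[e e0 eP]].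
  exists e => // r r0 re; apply: eP => //.
  by rewrite /ball /= sub0r normrN ger0_norm // ltW.
near=> r; apply: eP; first by near: r; exact: nbhs_right_gt.
by near: r; exact: nbhs_right_lt.
Unshelve. all: by end_near.
Qed.

Lemma exists_inv_nat_lt (e : R) : 0 < e -> exists n : nat, n.+1%:R^-1 < e.
Proof.
move=> e0; exists (Num.truncn e^-1).
by rewrite -[ltRHS]invrK ltf_pV2 ?posrE ?invr_gt0 ?ltr0n // truncnS_gt.
Qed.

Lemma limf_einf_right0 (f : R -> \bar R) (l : R) :
  (forall e, 0 < e -> \forall r \near 0^'+, ((l - e)%:E <= f r)%E) ->
  (forall e, 0 < e -> forall dl, 0 < dl -> exists2 r, 0 < r < dl & (f r <= (l + e)%:E)%E) ->
  limf_einf f 0^'+ = l%:E.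
Proof.
move=> lb ub; rewrite limf_einfE; apply/eqP; rewrite eq_le; apply/andP; split.
  apply: ge_ereal_sup => _ [V /near_right0P[dl dl0 Vdl] <-].
  apply/lee_addgt0Pr => e e0; rewrite -EFinD.
  have [r /andP[r0 rdl] fr] := ub e e0 dl dl0.
  by apply: le_trans (ereal_inf_lbound _) fr; exists r => //; exact: Vdl.
apply/lee_subgt0Pr => e e0; rewrite -EFinB.
apply: (@le_trans _ _ (ereal_inf (f @` [set r | ((l - e)%:E <= f r)%E]))).
  by apply: le_ereal_inf_tmp => _ [r lbr <-].
by apply: ereal_sup_ubound; exists [set r | ((l - e)%:E <= f r)%E] => //; exact: lb.
Qed.

Lemma cvge_right0 (f : R -> \bar R) (l : R) :
  (forall e, 0 < e -> \forall r \near 0^'+, ((l - e)%:E <= f r <= (l + e)%:E)%E) ->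
  f r @[r --> 0^'+] --> l%:E.
Proof.
move=> near_l; apply/fine_cvgP; split.
  apply: filterS (near_l 1 ltr01) => r.
  by case: (f r) => [t| |] //=; rewrite ?leey ?leNye ?andbF.
apply/cvgrPdist_le => e e0; apply: filterS (near_l e e0) => r /=.
by case: (f r) => [t| |] //=; rewrite ?leey ?leNye ?andbF // !lee_fin ler_distlC.
Qed.

End limits.

Lemma nneseries_eqy {R : realType} (u : nat -> \bar R) (n : nat -> nat) :
  (forall k, (0 <= u k)%E) -> (forall j, (j%:R%:E <= \sum_(0 <= k < n j) u k)%E) ->
  (\sum_(0 <= k <oo) u k = +oo)%E.
Proof.
move=> u_ge0 partial; apply/eqyP => A A0.
apply: (@le_trans _ _ (Num.truncn A).+1%:R%:E); first by rewrite lee_fin ltW // truncnS_gt.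
by apply: le_trans (partial _) _; exact: nneseries_lim_ge.
Qed.

Lemma ratio_cvg1_jumps {R : realType} (s e : nat -> R) (N : nat -> nat) :
  (fun n => s n / e n) @ \oo --> (1 : R) -> (forall j, (j <= N j)%N) ->
  (forall j, (0 < j)%N -> 0 < e (N j)) -> (forall j, 3 * e (N j) <= e (N j.+1)) ->
  \forall j \near \oo, s (N j) != s (N j.+1).
Proof.
move=> /cvgrPdist_lt/(_ 2^-1) close leN e_gt0 gap.
have [n _ {}close] : \forall n \near \oo, `|1 - s n / e n| < 2^-1 by apply: close; rewrite invr_gt0.
exists (maxn n 1) => // j /= ; rewrite geq_max => /andP[nj j1]; apply/eqP => sNj.
have /close/= := leq_trans nj (leN j); have /close/= := leq_trans nj (ltnW (leN j.+1)).
have a_gt0 := e_gt0 j j1; have b_gt0 : 0 < e (N j.+1) by have := gap j; lra.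
rewrite -sNj !ltr_norml => /andP[_ vb] /andP[va _].
have {va}va : s (N j) / e (N j) < 3 / 2 by lra.
have {vb}vb : 2^-1 < s (N j) / e (N j.+1) by lra.
rewrite ltr_pdivrMr // in va; rewrite ltr_pdivlMr // in vb.
by have := gap j; lra.
Qed.

Section geometric_scale.
Context {R : realType}.
Variables (b p : nat).
Hypothesis b_gt1 : (1 < b)%N.

Definition geom_scale (k : nat) : R := (b%:R ^+ (k.+1 * p))^-1.

Let b_gt0 : (0 : R) < b%:R.
Proof. by rewrite ltr0n (ltn_trans _ b_gt1). Qed.

Lemma geom_scale_gt0 k : 0 < geom_scale k.
Proof. by rewrite invr_gt0 exprn_gt0. Qed.

Lemma geom_scale_antitone i j : (i <= j)%N -> geom_scale j <= geom_scale i.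
Proof.
move=> ij; rewrite lef_pV2 ?posrE ?exprn_gt0 // ler_eXn2l ?ltr1n //.
by rewrite leq_mul2r ltnS ij orbT.
Qed.

Lemma ln_geom_scale k : - ln (geom_scale k) = (k.+1 * p)%:R * ln b%:R.
Proof. by rewrite lnV ?posrE ?exprn_gt0 // opprK lnXn // mulr_natl. Qed.

Hypothesis p_gt0 : (0 < p)%N.

Lemma geom_scale_lt1 k : geom_scale k < 1.
Proof.
by rewrite invf_lt1 ?exprn_gt0 // exprn_egt1 ?muln_eq0 -?lt0n ?p_gt0 // ltr1n.
Qed.

Lemma exists_geom_scale_lt v : 0 < v -> exists n, geom_scale n < v.
Proof.
move=> /exists_inv_nat_lt[n nv]; exists n; apply: le_lt_trans nv.
rewrite lef_pV2 ?posrE ?exprn_gt0 ?ltr0Sn // -natrX ler_nat.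
by rewrite (leq_trans (ltnW (ltn_expl _ b_gt1))) // leq_pexp2l ?(ltn_trans _ b_gt1) // leq_pmulr.
Qed.

End geometric_scale.

Section doubling_blocks.
Context {R : realType}.
Variable c : nat -> R.
Hypothesis c_gt0 : forall j, 0 < c j.
Hypothesis c_le1 : forall j, c j <= 1.

Let len (s : R) j : nat := (Num.truncn ((2 * s + 1) / c j)).+1.

(* Block j is made so long that its expected number of visits, c j times its
   length, exceeds twice the expected number of visits of all earlier blocks,
   which is carried along as the second component. *)
Fixpoint doubling_state j : nat * R :=
  if j is j'.+1 then
    let: (n, s) := doubling_state j' in ((n + len s j')%N, s + c j' *+ len s j')
  else (0%N, 0).

Definition doubling_blocks j := (doubling_state j).1.

Local Notation N := doubling_blocks.
Local Notation S j := (doubling_state j).2.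

Let NS j : N j.+1 = (N j + len (S j) j)%N.
Proof. by rewrite /N /=; case: doubling_state. Qed.

Let SS j : S j.+1 = S j + c j *+ len (S j) j.
Proof. by rewrite /=; case: doubling_state. Qed.

Lemma doubling_blocks0 : N 0 = 0%N. Proof. by []. Qed.

Lemma doubling_blocks_ltS j : (N j < N j.+1)%N.
Proof. by rewrite NS addnS ltnS leq_addr. Qed.

Lemma sum_doubling_blocks j : \sum_(0 <= k < N j) c (block N k) = S j.
Proof.
elim: j => [|j IH]; first by rewrite big_geq.
by rewrite (sum_block_recr doubling_blocks0 doubling_blocks_ltS) IH SS NS addKn.
Qed.

Let S_ge0 j : 0 <= S j.
Proof. by elim: j => // j IH; rewrite SS addr_ge0 // mulrn_wge0 // ltW. Qed.

Let len_ge j : 2 * S j + 1 <= c j *+ len (S j) j.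
Proof. by rewrite -[c j *+ _]mulr_natr -ler_pdivrMl // mulrC ltW // /len truncnS_gt. Qed.

Let len_le j : (len (S j) j)%:R <= (2 * S j + 1) / c j + 1.
Proof.
rewrite /len -addn1 natrD lerD2r truncn_le divr_ge0 ?(ltW (c_gt0 j)) //.
by have := S_ge0 j; lra.
Qed.

Lemma doubling_blocks_gap j : 3 * S j + 1 <= S j.+1.
Proof. by rewrite SS; have := len_ge j; lra. Qed.

Lemma doubling_blocks_ge j : j%:R <= S j.
Proof.
elim: j => // j IH; have := doubling_blocks_gap j; rewrite -natr1.
have := S_ge0 j; lra.
Qed.

Lemma doubling_blocks_le j : S j + 1 <= 3 ^+ j.
Proof.
elim: j => [|j IH] /=; first by rewrite add0r expr0.
rewrite SS exprS -[c j *+ _]mulr_natr.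
have : c j * (len (S j) j)%:R <= 2 * S j + 2.
  apply: le_trans (ler_wpM2l (ltW (c_gt0 j)) (len_le j)) _.
  by rewrite mulrDr mulrCA mulfV ?gt_eqF // !mulr1; have := c_le1 j; lra.
lra.
Qed.

Lemma doubling_blocks_len j :
  ((N j.+1 - N j)%N%:R : R) <= (2 * S j + 1) / c j + 1.
Proof. by rewrite NS addKn. Qed.

Lemma doubling_blocks_le_pow q : (forall j, geom_scale 3 q j <= c j) ->
  forall j, (N j)%:R <= 3 ^+ (j * q.+1) :> R.
Proof.
move=> c_ge j; elim: j => [|j IH]; first by rewrite doubling_blocks0 expr0 ler01.
have cV : (c j)^-1 <= 3 ^+ (j.+1 * q).
  by rewrite -[leRHS]invrK lef_pV2 ?posrE ?invr_gt0 ?exprn_gt0 ?c_ge.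
have Z : 3 ^+ (j * q.+1) <= 3 ^+ j * 3 ^+ (j.+1 * q) :> R.
  by rewrite -exprD ler_eXn2l ?ltr1n // mulnS mulSn leq_add2l leq_addl.
have -> : 3 ^+ (j.+1 * q.+1) = 3 * (3 ^+ j * 3 ^+ (j.+1 * q)) :> R.
  by rewrite -exprD -exprS mulnS addSn.
have Q1 : 1 <= 3 ^+ (j.+1 * q) :> R by rewrite exprn_ege1 // ler1n.
have cV0 : 0 < (c j)^-1 by rewrite invr_gt0.
rewrite -(subnKC (ltnW (doubling_blocks_ltS j))) natrD.
have := doubling_blocks_len j; have := doubling_blocks_le j; have := S_ge0 j.
set L := ((N j.+1 - N j)%N%:R : R); nra.
Qed.

End doubling_blocks.

Lemma exists_close_ratios {R : realType} (e : R) : 0 < e -> exists q : nat,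
  [/\ 1 - e <= (q.+1%:R - 1) / (q.+1%:R + 1), (q.+1%:R + 1) / q.+1%:R <= 1 + e &
      (q.+1%:R + 3) / q.+1%:R <= 1 + e].
Proof.
move=> e0; have [q qe] : exists q : nat, q.+1%:R^-1 < e / 3 by apply: exists_inv_nat_lt; lra.
exists q; have q_gt0 : (0 : R) < q.+1%:R by rewrite ltr0n.
have qV_gt0 : (0 : R) < q.+1%:R^-1 by rewrite invr_gt0.
have qV2 : (q.+1%:R + 1)^-1 <= q.+1%:R^-1 :> R by rewrite lef_pV2 ?posrE ?ltr_wpDr //; lra.
rewrite (_ : (q.+1%:R - 1) / (q.+1%:R + 1) = 1 - 2 * (q.+1%:R + 1)^-1); last first.
  by field; rewrite gt_eqF // ltr_wpDr.
rewrite (_ : (q.+1%:R + 1) / q.+1%:R = 1 + q.+1%:R^-1); last by field; rewrite gt_eqF.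
rewrite (_ : (q.+1%:R + 3) / q.+1%:R = 1 + 3 * q.+1%:R^-1); last by field; rewrite gt_eqF.
move: qe qV2 qV_gt0; set a := q.+1%:R^-1; set b := (_ + 1)^-1 => qe qV2 qV_gt0.
split; lra.
Qed.

Lemma ln_sparse_hit_le {R : realType} (q n k : nat) (w : R) :
  (0 < q)%N -> 0 < w -> w <= 1 -> (k < n + (Num.truncn w^-1).+1)%N ->
  w <= ((n + 2)%:R ^+ q)^-1 -> ln k.+1%:R <= (q%:R + 1) / q%:R * - ln w.
Proof.
move=> q0 w_gt0 w_le1 kn w_le.
have wV1 : 1 <= w^-1 by rewrite invf_ge1.
have n2_gt0 : (0 : R) < (n + 2)%:R by rewrite ltr0n addn2.
have lnnw : q%:R * ln (n + 2)%:R <= - ln w.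
  rewrite mulr_natl -lnXn // -lnV ?posrE // ler_ln ?posrE ?invr_gt0 ?exprn_gt0 //.
  by rewrite -[leLHS]invrK lef_pV2 ?posrE ?invr_gt0 ?exprn_gt0.
have k1 : (k.+1%:R : R) <= (n + 2)%:R * w^-1.
  have L : ((Num.truncn w^-1).+1%:R : R) <= w^-1 + 1.
    by rewrite -addn1 natrD lerD2r truncn_le invr_ge0 ltW.
  move: kn; rewrite -(ler_nat R) !natrD => kn.
  have : (n%:R : R) <= n%:R * w^-1 by rewrite ler_peMr.
  nra.
have lnk : ln k.+1%:R <= ln (n + 2)%:R - ln w.
  by rewrite -lnV ?posrE // -lnM ?posrE ?invr_gt0 // ler_ln ?posrE ?mulr_gt0 ?invr_gt0.
apply: le_trans lnk _; have q_gt0 : (0 : R) < q%:R by rewrite ltr0n.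
have : ln (n + 2)%:R <= - ln w / q%:R by rewrite ler_pdivlMr // mulrC.
rewrite (_ : _ / _ * _ = - ln w / q%:R + - ln w); last by field; rewrite gt_eqF.
lra.
Qed.

Section metric_balls.
Context {R : realType} {X : Type} (dist : X -> X -> R).
Hypothesis dist_metric : is_metric dist.

Lemma bigcap_balls y (B : R -> set X) :
  (forall r, oball dist y r `<=` B r) -> (forall r, B r `<=` cball dist y r) ->
  \bigcap_n B n.+1%:R^-1 = [set y].
Proof.
case: dist_metric => d_ge0 d_eq0 _ _ oB Bc; apply/seteqP; split => [x Bx|_ ->].
  apply/d_eq0/eqP; rewrite eq_le d_ge0 andbT; apply/ler_addgt0Pr => e e0.
  have [n ne] := exists_inv_nat_lt e0.
  by rewrite add0r; apply: le_trans (ltW ne); exact: Bc (Bx n I).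
by move=> n _; apply: oB; rewrite /oball /= (proj2 (d_eq0 y y)) // invr_gt0.
Qed.

Lemma bigcup_balls y (B : R -> set X) :
  (forall r, oball dist y r `<=` B r) -> \bigcup_n B n%:R = setT.
Proof.
move=> oB; apply/seteqP; split => // x _.
exists (Num.truncn `|dist x y|).+1 => //; apply: oB; rewrite /oball /=.
exact: le_lt_trans (ler_norm _) (truncnS_gt _).
Qed.

Lemma cball_rcont y r : cball dist y r = \bigcap_n cball dist y (r + n.+1%:R^-1).
Proof.
apply/seteqP; split => [x xr n _|x xrn]; first by rewrite /cball /= ler_wpDr // ltW.
rewrite /cball /= leNgt; apply/negP => rx.
have [n ne] : exists n : nat, n.+1%:R^-1 < dist x y - r by apply: exists_inv_nat_lt; lra.
by have := xrn n I; rewrite /cball /=; move: ne; set t := _^-1; lra.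
Qed.

End metric_balls.

Section borel_balls.
Context {d : measure_display} {R : realType} {X : measurableType d} (dist : X -> X -> R).
Hypothesis dist_metric : is_metric dist.
Hypothesis borel : @measurable d X = <<s [set A | metric_open dist A] >>.

Let measurable_open A : metric_open dist A -> measurable A.
Proof. by rewrite borel; exact: sub_sigma_algebra. Qed.

Lemma measurable_oball y r : measurable (oball dist y r).
Proof.
case: dist_metric => _ _ _ tri; apply: measurable_open => x xr.
exists (r - dist x y); first by rewrite subr_gt0.
by move=> z; rewrite /oball /=; have := tri z x y; lra.
Qed.

Lemma measurable_cball y r : measurable (cball dist y r).
Proof.
case: dist_metric => _ _ sym tri; rewrite -[cball _ _ _]setCK; apply: measurableC.
apply: measurable_open => x /negP; rewrite -ltNge => rx.
exists (dist x y - r); first by rewrite subr_gt0.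
by move=> z; rewrite /oball /cball /= => xz zr; have := tri x z y; rewrite (sym x z); lra.
Qed.

End borel_balls.

Section measure_of_small_and_large_balls.
Context {d : measure_display} {R : realType} {X : measurableType d}.
Variables (mu : probability X R) (B : R -> set X).
Hypothesis measurableB : forall r, measurable (B r).
Hypothesis le_B : forall r s, r <= s -> B r `<=` B s.

Lemma measure_small_balls y : \bigcap_n B n.+1%:R^-1 = [set y] -> mu [set y] = 0%E ->
  forall e, 0 < e -> exists2 r, 0 < r & (mu (B r) < e%:E)%E.
Proof.
move=> By muy0 e e0; apply: contrapT => small.
pose F n := B n.+1%:R^-1.
have niF : nonincreasing_seq F.
  by move=> i j ij; apply/subsetPset/le_B; rewrite lef_pV2 ?posrE ?ltr0n // ler_nat.
have muF0 : (mu (F 0%N) < +oo)%E.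
  by apply: le_lt_trans (probability_le1 mu (measurableB _)) _; rewrite ltry.
have mIF : measurable (\bigcap_n F n).
  by apply: bigcap_measurable => [|n _]; [exists 0%N | exact: measurableB].
have := nonincreasing_cvg_mu muF0 (fun n => measurableB _) mIF niF.
rewrite By => lim0; suff : (e%:E <= 0)%E by rewrite lee_fin leNgt e0.
rewrite -muy0; apply: (cvge_lb lim0) => n /=; rewrite leNgt; apply/negP => Fe; apply: small.
by exists n.+1%:R^-1; rewrite ?invr_gt0.
Qed.

Lemma measure_large_balls : \bigcup_n B n%:R = setT ->
  forall e, e < 1 -> exists r, (e%:E < mu (B r))%E.
Proof.
move=> BT e e1; apply: contrapT => large.
have ndF : nondecreasing_seq (fun n => B n%:R).
  by move=> i j ij; apply/subsetPset/le_B; rewrite ler_nat.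
have mUF : measurable (\bigcup_n B n%:R) by apply: bigcup_measurable => n _; exact: measurableB.
have := @nondecreasing_cvg_mu _ _ _ mu _ (fun n => measurableB _) mUF ndF.
rewrite BT => lim1; suff : (1 <= e%:E)%E by rewrite lee_fin leNgt e1.
rewrite -(probability_setT mu); apply: (cvge_ub lim1) => n /=.
by rewrite leNgt; apply/negP => eB; apply: large; exists n%:R.
Qed.

End measure_of_small_and_large_balls.

Section measure_of_balls.
Context {d : measure_display} {R : realType} {X : measurableType d}.
Variables (mu : probability X R) (T : X -> X) (B : R -> set X).
Hypothesis measurableB : forall r, measurable (B r).
Hypothesis le_B : forall r s, r <= s -> B r `<=` B s.
Hypothesis muB_gt0 : forall r, 0 < r -> (0 < mu (B r))%E.
Hypothesis muB_small : forall e, 0 < e -> exists2 r, 0 < r & (mu (B r) < e%:E)%E.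
Hypothesis muB_large : forall e, e < 1 -> exists r, (e%:E < mu (B r))%E.

Local Notation m r := (fine (mu (B r))).

Let muBE r : mu (B r) = (m r)%:E.
Proof. by rewrite fineK // fin_num_measure. Qed.

Let le_m r s : r <= s -> m r <= m s.
Proof. by move=> rs; rewrite -lee_fin -!muBE le_measure ?inE //; exact: le_B. Qed.

Let m_gt0 r : 0 < r -> 0 < m r.
Proof. by move=> r0; rewrite -lte_fin -muBE muB_gt0. Qed.

Let m_small e : 0 < e -> exists2 r, 0 < r & m r < e.
Proof. by move=> /muB_small[r r0 re]; exists r; rewrite // -lte_fin -muBE. Qed.

Let m_large e : e < 1 -> exists r, e < m r.
Proof. by move=> /muB_large[r re]; exists r; rewrite -lte_fin -muBE. Qed.

Let m_le1 r : m r <= 1.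
Proof. by rewrite -lee_fin -muBE probability_le1. Qed.

Lemma small_balls_cover th : 0 < th -> th < 1 -> exists D, [/\ measurable D,
  (mu D <= th%:E)%E & forall r, m r <= th -> B r `<=` D].
Proof.
move=> th0 th1; pose S := [set r | m r <= th].
have [r0 r00 hr0] := m_small th0; have [r1 hr1] := m_large th1.
have supS : has_sup S.
  split; first by exists r0; rewrite /S /= ltW.
  exists r1 => r Sr; rewrite leNgt; apply/negP => /ltW/le_m; rewrite /S /= in Sr; lra.
have S_ub := sup_upper_bound supS.
have [supSth|thsupS] := lerP (m (sup S)) th.
  exists (B (sup S)); split => //; first by rewrite muBE lee_fin.
  by move=> r Sr; apply: le_B; exact: S_ub.
pose F n := B (sup S - n.+1%:R^-1).
have mF n : measurable (F n) := measurableB _.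
have mUF : measurable (\bigcup_n F n) by exact: bigcup_measurable.
exists (\bigcup_n F n); split => //.
- have ndF : nondecreasing_seq F.
    move=> i j ij; apply/subsetPset/le_B.
    by rewrite lerD2l lerN2 lef_pV2 ?posrE ?ltr0n // ler_nat.
  apply: cvge_ub (nondecreasing_cvg_mu mF mUF ndF) _ => n /=.
  have [|t St ht] := @sup_adherent _ S n.+1%:R^-1 _ supS; first by rewrite invr_gt0.
  apply: (@le_trans _ _ (mu (B t))); last by rewrite muBE lee_fin.
  by apply: le_measure; rewrite ?inE //; exact: le_B (ltW ht).
- move=> r Sr; have rs : r < sup S.
    by rewrite lt_neqAle S_ub // andbT; apply: contraTneq thsupS => <-; rewrite -leNgt.
  have [n hn] : exists n : nat, n.+1%:R^-1 < sup S - r.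
    by apply: exists_inv_nat_lt; rewrite subr_gt0.
  by move=> x Brx; exists n => //; apply: le_B Brx; rewrite lerBrDr -lerBrDl ltW.
Qed.

Hypothesis mT : measurable_fun setT T.
Hypothesis T_preserving : forall A, measurable A -> mu (T @^-1` A) = mu A.

Let measure_visits_le M D : measurable D ->
  (mu (\bigcup_(n in `I_M) iter n T @^-1` D) <= mu D *+ M)%E.
Proof.
move=> mD; rewrite bigcup_mkord.
have mDn n : measurable (iter n T @^-1` D) by exact: measurable_preimage_iter.
apply: le_trans.
  apply: (content_subadditive mu (F := fun n => iter n T @^-1` D) (n := M)
    (fun n _ => mDn n)) => //.
  exact: bigsetU_measurable.
rewrite (eq_bigr (fun=> mu D)) ?sumr_const ?card_ord // => n _.
exact: measure_preimage_iter.
Qed.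

Lemma ae_no_early_visits (th : nat -> R) (M : nat -> nat) :
  (forall k, 0 < th k) -> (forall k, th k < 1) ->
  (forall k, th k *+ M k <= (2 ^ k.+1)%:R^-1) ->
  {ae mu, forall x, \forall k \near \oo,
    forall r n, m r <= th k -> (n < M k)%N -> ~ B r (iter n T x)}.
Proof.
move=> th_gt0 th_lt1 thM.
have /choice[D cover] := fun k => small_balls_cover (th_gt0 k) (th_lt1 k).
have {cover}[mD muD BD] := all_and3 cover.
pose E k := \bigcup_(n in `I_(M k)) iter n T @^-1` D k.
have mE k : measurable (E k).
  by apply: bigcup_measurable => n _; exact: measurable_preimage_iter.
have muE k : (mu (E k) <= ((2 ^ k.+1)%:R^-1)%:E)%E.
  apply: le_trans (measure_visits_le _ (mD k)) _.
  rewrite -(fineK (fin_num_measure mu _ (mD k))) -EFin_natmul lee_fin.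
  by apply: le_trans (thM k); rewrite lerMn2r -lee_fin fineK ?fin_num_measure ?muD ?orbT.
apply: filterS (ae_eventually_notin mE muE) => x; apply: filterS => k notE r n mr nM Bn.
by apply: notE; exists n => //; exact: BD mr _ Bn.
Qed.

Lemma hratio_lower_bound q : (0 < q)%N ->
  {ae mu, forall x, \forall r \near 0^'+,
    (((q%:R - 1) / (q%:R + 1))%:E <= hratio T mu (B r) x)%E}.
Proof.
move=> q0; pose th := @geom_scale R 2 q.+1; pose M k := (2 ^ (k.+1 * q))%N.
have b2 : (1 < 2)%N by [].
have thM k : th k *+ M k <= (2 ^ k.+1)%:R^-1.
  rewrite -[th k *+ _]mulr_natr /th /geom_scale /M !natrX mulnS exprD invfM -mulrA.
  by rewrite mulVf ?expf_neq0 // mulr1.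
have := ae_no_early_visits (geom_scale_gt0 q.+1 b2) (geom_scale_lt1 b2 (ltn0Sn q)) thM.
apply: filterS => x [K _ novisit]; pose K' := maxn K q.
have [dl dl0 mdl] := m_small (geom_scale_gt0 q.+1 b2 K').
apply/near_right0P; exists dl => // r r0 rdl; have mr0 := m_gt0 r0.
have [n thn] := exists_geom_scale_lt b2 (ltn0Sn q) mr0.
have mr_th : m r < th K' := le_lt_trans (le_m (ltW rdl)) mdl.
have [k K'k [/negP mrk thk]] := @exists_crossing (fun k => th k < m r) K' (maxn K' n)
  (leq_maxl _ _) (fun th_mr => lt_nsym mr_th th_mr)
  (le_lt_trans (geom_scale_antitone q.+1 b2 (leq_maxr _ _)) thn).
rewrite -leNgt in mrk.
apply: (@hratio_ge _ _ _ T mu (B r) x _ (M k)).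
- by rewrite mr0 (le_lt_trans mrk) // geom_scale_lt1.
- by rewrite expn_gt0.
- by move=> i _ iM; apply: novisit (leq_trans (leq_maxl K q) K'k) _ _ mrk iM.
have ln2_gt0 : (0 : R) < ln 2 by rewrite ln_gt0 // ltr1n.
have lnmr : - ln (m r) <= (k.+2 * q.+1)%:R * ln 2.
  by rewrite -(ln_geom_scale _ b2) lerN2 ler_ln ?posrE ?geom_scale_gt0 // ltW.
have c_ge0 : (0 : R) <= (q%:R - 1) / (q%:R + 1).
  by rewrite divr_ge0 // ?subr_ge0 ?ler1n // addr_ge0.
have qk : (q%:R : R) <= k%:R + 1 + 1.
  by rewrite !natr1 ler_nat (leq_trans (leq_maxr K q)) // (leq_trans K'k) // -addn2 leq_addr.
apply: le_trans (ler_wpM2l c_ge0 lnmr) _.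
rewrite /M natrX lnXn // -[ln 2 *+ _]mulr_natr; move: ln2_gt0; set a := ln 2 => a_gt0.
rewrite !natrM -!natr1; have q1 : (1 : R) <= q%:R by rewrite ler1n.
have q1_neq0 : q%:R + 1 != 0 :> R by rewrite lt0r_neq0 //; lra.
rewrite (_ : _ / _ * _ = (q%:R - 1) * (k%:R + 1 + 1) * a); last by field.
nra.
Qed.

Section sbc_blocks.
Variable u : nat -> R.
Hypothesis u_gt0 : forall j, 0 < u j.
Hypothesis le_u : {homo u : i j / (i <= j)%N >-> j <= i}.
Local Notation c j := (m (u j)).
Local Notation N := (doubling_blocks (fun j => c j)).

Let N0 : N 0 = 0%N := doubling_blocks0 _.
Let N_ltS j : (N j < N j.+1)%N := doubling_blocks_ltS _ j.

Lemma ae_hit_every_block :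
  (forall r : nat -> R, (forall k, 0 < r k) -> (forall k, B (r k.+1) `<=` B (r k)) ->
     (\sum_(0 <= k <oo) mu (B (r k)) = +oo)%E -> SBC T mu (fun k => B (r k))) ->
  {ae mu, forall x, \forall j \near \oo,
    exists2 k, (N j <= k < N j.+1)%N & B (u j) (iter k.+1 T x)}.
Proof.
move=> sbc; pose rho k := u (block N k); have c_gt0 j : 0 < c j := m_gt0 (u_gt0 j).
have sum_rho j : \sum_(k < N j) fine (mu (B (rho k))) = (doubling_state (fun j => c j) j).2.
  by rewrite -sum_doubling_blocks big_mkord.
have : SBC T mu (fun k => B (rho k)).
  apply: sbc => [k|k|]; first exact: u_gt0.
    by apply: le_B; apply: le_u; exact: block_homo N0 N_ltS _ _ (leqnSn k).
  apply: (nneseries_eqy (n := N)) => [k|j]; first exact: measure_ge0.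
  under eq_bigr do rewrite muBE; rewrite sumEFin lee_fin big_mkord sum_rho.
  exact: doubling_blocks_ge c_gt0 j.
have S_gt0 j : (0 < j)%N -> 0 < \sum_(k < N j) fine (mu (B (rho k))).
  by rewrite sum_rho => j0; apply: lt_le_trans (doubling_blocks_ge c_gt0 j); rewrite ltr0n.
have S_gap j : 3 * \sum_(k < N j) fine (mu (B (rho k))) <= \sum_(k < N j.+1) fine (mu (B (rho k))).
  by rewrite !sum_rho; have := doubling_blocks_gap c_gt0 j; lra.
apply: filterS => x /ratio_cvg1_jumps/(_ (leq_block_start N_ltS) S_gt0 S_gap).
apply: filterS => j /eqP jump; apply: contrapT => nohit; apply: jump.
set f := fun k : nat => (`[< B (rho k) (iter k.+1 T x) >]%:R : R).
rewrite -/(\sum_(k < N j) f k) -/(\sum_(k < N j.+1) f k).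
rewrite -!(big_mkord xpredT f) [RHS](@big_cat_nat _ _ _ (N j)) //= ?(ltnW (N_ltS j)) //.
rewrite [X in _ + X]big_nat_cond [X in _ + X]big1 ?addr0 // => k /andP[/= kj _].
by rewrite /f asboolF // /rho (blockE N0 N_ltS kj) => Bk; apply: nohit; exists k.
Qed.

End sbc_blocks.

Section right_continuous.
Hypothesis B_rcont : forall r, B r = \bigcap_n B (r + n.+1%:R^-1).

Lemma threshold_radius th : 0 < th -> th < 1 ->
  exists u, [/\ 0 < u, th <= m u & forall r, r < u -> m r < th].
Proof.
move=> th0 th1; pose S := [set r | m r < th].
have [r0 r00 hr0] := m_small th0; have [r1 hr1] := m_large th1.
have S0 : S !=set0 by exists r0.
have supS : has_sup S.
  split => //; exists r1 => r Sr; rewrite leNgt; apply/negP => /ltW/le_m.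
  by rewrite /S /= in Sr; lra.
have S_ub := sup_upper_bound supS.
exists (sup S); split; first exact: lt_le_trans r00 (S_ub _ hr0).
- pose F n := B (sup S + n.+1%:R^-1).
  have mF n : measurable (F n) := measurableB _.
  have niF : nonincreasing_seq F.
    move=> i j ij; apply/subsetPset/le_B.
    by rewrite lerD2l lef_pV2 ?posrE ?ltr0n // ler_nat.
  have mIF : measurable (\bigcap_n F n) by exact: bigcap_measurable.
  have muF0 : (mu (F 0%N) < +oo)%E by rewrite muBE ltry.
  have := nonincreasing_cvg_mu muF0 mF mIF niF.
  rewrite -B_rcont -lee_fin -muBE => /cvge_lb; apply => n /=.
  rewrite muBE lee_fin leNgt; apply/negP => /S_ub.
  by rewrite gerDl leNgt invr_gt0 ltr0n.
- by move=> r /(sup_gt S0)[t St rt]; exact: le_lt_trans (le_m (ltW rt)) St.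
Qed.

Lemma hratio_upper_bound_sbc q : (0 < q)%N ->
  (forall r : nat -> R, (forall k, 0 < r k) -> (forall k, B (r k.+1) `<=` B (r k)) ->
     (\sum_(0 <= k <oo) mu (B (r k)) = +oo)%E -> SBC T mu (fun k => B (r k))) ->
  {ae mu, forall x, \forall r \near 0^'+,
    (hratio T mu (B r) x <= ((q%:R + 3) / q%:R)%:E)%E}.
Proof.
move=> q0 sbc; pose th := @geom_scale R 3 q; have b3 : (1 < 3)%N by [].
have /choice[u uP] := fun j => threshold_radius (geom_scale_gt0 q b3 j) (geom_scale_lt1 b3 q0 j).
have {uP}[u_gt0 th_mu mu_th] := all_and3 uP.
have le_u : {homo u : i j / (i <= j)%N >-> j <= i}.
  move=> i j ij; rewrite leNgt; apply/negP => /mu_th mth.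
  by have := lt_le_trans mth (geom_scale_antitone q b3 ij); rewrite ltNge th_mu.
have N_le := doubling_blocks_le_pow (fun j => m_gt0 (u_gt0 j)) (fun j => m_le1 _) th_mu.
apply: filterS (ae_hit_every_block u_gt0 le_u sbc) => x [J _ hit].
pose K := maxn J q; apply/near_right0P; exists (u K) => // r r0 ruK.
have mr0 := m_gt0 r0; have [n thn] := exists_geom_scale_lt b3 q0 mr0.
have ur i : th i < m r -> u i <= r.
  by move=> thr; rewrite leNgt; apply/negP => /mu_th/(lt_nsym thr).
have notuK : ~ u K <= r by apply/negP; rewrite -ltNge.
have [j Kj [/negP rj uj]] := @exists_crossing (fun i => u i <= r) K (maxn K n)
  (leq_maxl _ _) notuK (ur _ (le_lt_trans (geom_scale_antitone q b3 (leq_maxr _ _)) thn)).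
rewrite -ltNge in rj.
have [k /andP[_ kN] Bk] := hit j.+1 (leq_trans (leq_maxl J q) (leq_trans Kj (leqnSn j))).
apply: (@hratio_le _ _ _ T mu (B r) x _ k.+1) => //.
- by rewrite mr0 (lt_trans (mu_th j r rj)) ?geom_scale_lt1.
- exact: le_B uj _ Bk.
have lnk : ln k.+1%:R <= (j.+2 * q.+1)%:R * ln 3 :> R.
  rewrite mulr_natl -lnXn // ler_ln ?posrE ?ltr0n ?exprn_gt0 //.
  by apply: le_trans (N_le j.+2); rewrite ler_nat.
have lnmr : (j.+1 * q)%:R * ln 3 <= - ln (m r).
  by rewrite -(ln_geom_scale _ b3) lerN2 ler_ln ?posrE ?geom_scale_gt0 // ltW // mu_th.
have qj : (q%:R : R) <= j%:R by rewrite ler_nat (leq_trans (leq_maxr J q) Kj).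
have q_gt0 : (0 : R) < q%:R by rewrite ltr0n.
have ln3_gt0 : (0 : R) < ln 3 by rewrite ln_gt0 // ltr1n.
apply: le_trans lnk _; apply: le_trans (ler_wpM2l _ lnmr); last by rewrite divr_ge0 // addr_ge0.
rewrite natrM -[j.+2]addn2 -[q.+1]addn1 -[j.+1]addn1 !natrD natrM.
rewrite (_ : _ / _ * _ = (q%:R + 3) * (j%:R + 1) * ln 3); last by field; rewrite gt_eqF.
nra.
Qed.

Lemma ae_lim_hratio :
  (forall r : nat -> R, (forall k, 0 < r k) -> (forall k, B (r k.+1) `<=` B (r k)) ->
     (\sum_(0 <= k <oo) mu (B (r k)) = +oo)%E -> SBC T mu (fun k => B (r k))) ->
  {ae mu, forall x, hratio T mu (B r) x @[r --> 0^'+] --> 1%E}.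
Proof.
move=> sbc.
apply: filterS2 (ae_foralln (fun q => hratio_lower_bound (ltn0Sn q)))
  (ae_foralln (fun q => hratio_upper_bound_sbc (ltn0Sn q) sbc)) => x lb ub.
apply: cvge_right0 => e e0; have [q [lbq _ ubq]] := exists_close_ratios e0.
apply: filterS2 (lb q) (ub q) => r lbr ubr.
by rewrite (le_trans _ lbr) ?(le_trans ubr) // lee_fin.
Qed.

End right_continuous.

(* Radius s j is used throughout block j. Every block then contributes at
   least 1 to the measure series, and the bound on m (s j) makes a visit
   during block j cheap. *)
Lemma exists_sparse_radii q : exists (N : nat -> nat) (s : nat -> R), [/\ N 0 = 0%N,
  forall j, N j.+1 = (N j + (Num.truncn (m (s j))^-1).+1)%N,
  forall j, 0 < s j, forall j, s j.+1 <= s j &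
  forall j, m (s j) <= ((N j + 2)%:R ^+ q)^-1].
Proof.
pose next (st : nat * R) := (st.1 + (Num.truncn (m st.2)^-1).+1)%N.
pose step (st st' : nat * R) := [/\ st'.1 = next st, 0 < st'.2,
  0 < st.2 -> st'.2 <= st.2 & m st'.2 <= ((st'.1 + 2)%:R ^+ q)^-1].
have target_gt0 n : 0 < ((n + 2)%:R ^+ q)^-1 :> R by rewrite invr_gt0 exprn_gt0 // ltr0n addn2.
have small n b : exists2 s', 0 < s' & (0 < b -> s' <= b) /\ m s' <= ((n + 2)%:R ^+ q)^-1.
  have [s' s'0 ms'] := m_small (target_gt0 n).
  exists (if 0 < b then Num.min s' b else s').
    by case: ifP => b0; rewrite ?lt_min ?s'0.
  split; first by move=> ->; rewrite ge_min lexx orbT.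
  by apply: ltW; apply: le_lt_trans ms'; case: ifP => // _; apply: le_m; rewrite ge_min lexx.
have [s0 s00 [_ ms0]] := small 0%N 1.
have stepP st : exists st', step st st'.
  have [s' s'0 [s'b ms']] := small (next st) st.2.
  by exists (next st, s').
have [f [f0 fS]] := dependent_choice (fun st => cid (stepP st)) (0%N, s0).
exists (fun j => (f j).1), (fun j => (f j).2).
have s_gt0 j : 0 < (f j).2 by case: j => [|j]; [rewrite f0 | case: (fS j)].
split => [|j|//|j|[|j]]; first by rewrite f0.
- by case: (fS j).
- by case: (fS j) => _ _ /(_ (s_gt0 j)).
- by rewrite f0.
- by case: (fS j).
Qed.

Lemma sparse_radii_small q (N : nat -> nat) (s : nat -> R) : (0 < q)%N ->
  (forall j, (j <= N j)%N) -> (forall j, m (s j) <= ((N j + 2)%:R ^+ q)^-1) ->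
  forall dl, 0 < dl -> exists n, s n < dl.
Proof.
move=> q0 leN ms dl dl0; have [n hn] := exists_inv_nat_lt (m_gt0 dl0); exists n.
rewrite ltNge; apply/negP => /le_m; apply/negP; rewrite -ltNge.
apply: le_lt_trans (ms n) (le_lt_trans _ hn).
rewrite lef_pV2 ?posrE ?exprn_gt0 ?ltr0n ?addn2 // -natrX ler_nat.
by rewrite (leq_trans _ (leq_pexp2l _ q0)) ?addn2 // expn1 ltnS leqW.
Qed.

Lemma ae_limsup_preim (A : nat -> set X) : (forall k, measurable (A k)) ->
  mu (limsup_preim T A) = 1%E -> {ae mu, forall x, limsup_preim T A x}.
Proof.
move=> mA LS1.
have LSE : limsup_preim T A =
    \bigcap_n \bigcup_(k in [set k | (n <= k)%N]) iter k.+1 T @^-1` A k.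
  apply/seteqP; split => x hx n; first by move=> _; have [k [nk Ak]] := hx n; exists k.
  by have [k nk Ak] := hx n I; exists k.
have mLS : measurable (limsup_preim T A).
  rewrite LSE; apply: bigcap_measurable => [|n _]; first by exists 0%N.
  by apply: bigcup_measurable => k _; exact: measurable_preimage_iter.
exists (~` limsup_preim T A); split => //; first exact: measurableC.
by rewrite probability_setC // LS1 subee.
Qed.

Lemma hratio_upper_bound_limsup q : (0 < q)%N ->
  (forall r : nat -> R, (forall k, 0 < r k) -> (forall k, B (r k.+1) `<=` B (r k)) ->
     (\sum_(0 <= k <oo) mu (B (r k)) = +oo)%E ->
     mu (limsup_preim T (fun k => B (r k))) = 1%E) ->
  {ae mu, forall x, forall dl, 0 < dl -> exists2 r, 0 < r < dl &
    (hratio T mu (B r) x <= ((q%:R + 1) / q%:R)%:E)%E}.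
Proof.
move=> q0 limsup1; have [N [s [N0 NS s_gt0 le_sS ms]]] := exists_sparse_radii q.
have N_ltS j : (N j < N j.+1)%N by rewrite NS addnS ltnS leq_addr.
have le_s : {homo s : i j / (i <= j)%N >-> j <= i}.
  exact: (@homo_leq _ s (fun a b => b <= a) lexx (fun _ _ _ h1 h2 => le_trans h2 h1) le_sS).
pose rho k := s (block N k).
have block_ge1 j : 1 <= m (s j) *+ (N j.+1 - N j).
  by rewrite NS addKn -mulr_natr -ler_pdivrMl ?m_gt0 // mulr1 ltW // truncnS_gt.
have sum_rho : (\sum_(0 <= k <oo) mu (B (rho k)) = +oo)%E.
  apply: (nneseries_eqy (n := N)) => [k|j]; first exact: measure_ge0.
  under eq_bigr do rewrite muBE; rewrite sumEFin lee_fin.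
  elim: j => [|j IH]; first by rewrite N0 big_geq.
  by rewrite (sum_block_recr N0 N_ltS (fun i => m (s i))) -natr1; have := block_ge1 j; lra.
have /(ae_limsup_preim (fun k => measurableB (rho k))) := limsup1 rho (fun k => s_gt0 _)
  (fun k => le_B (le_s _ _ (block_homo N0 N_ltS (leqnSn k)))) sum_rho.
apply: filterS => x hits dl dl0.
have [n sn_dl] := sparse_radii_small q0 (leq_block_start N_ltS) ms dl0.
have [k [Nnk Bk]] := hits (N n).
have nj : (n <= block N k)%N := block_ge N0 N_ltS Nnk.
exists (s (block N k)); first by rewrite s_gt0 (le_lt_trans (le_s _ _ nj)).
move: Bk; rewrite /rho; set j := block N k => Bk.
have /andP[_ kN] := block_bounds N0 N_ltS k; rewrite -/j in kN.
have w_gt0 : 0 < m (s j) := m_gt0 (s_gt0 j).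
apply: (@hratio_le _ _ _ T mu (B (s j)) x _ k.+1) => //.
  rewrite w_gt0 (le_lt_trans (ms j)) // invf_lt1 // exprn_egt1 -?lt0n //.
  by rewrite ltr1n addn2.
by apply: ln_sparse_hit_le q0 w_gt0 (m_le1 _) _ (ms j); rewrite -NS.
Qed.

Lemma ae_liminf_hratio :
  (forall r : nat -> R, (forall k, 0 < r k) -> (forall k, B (r k.+1) `<=` B (r k)) ->
     (\sum_(0 <= k <oo) mu (B (r k)) = +oo)%E ->
     mu (limsup_preim T (fun k => B (r k))) = 1%E) ->
  {ae mu, forall x, limf_einf (fun r => hratio T mu (B r) x) 0^'+ = 1%E}.
Proof.
move=> limsup1.
apply: filterS2 (ae_foralln (fun q => hratio_lower_bound (ltn0Sn q)))
  (ae_foralln (fun q => hratio_upper_bound_limsup (ltn0Sn q) limsup1)) => x lb ub.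
apply: limf_einf_right0 => e e0; have [q [lbq ubq _]] := exists_close_ratios e0.
  by apply: filterS (lb q) => r; apply: le_trans; rewrite lee_fin.
move=> dl dl0; have [r rdl hr] := ub q dl dl0.
by exists r => //; apply: le_trans hr _; rewrite lee_fin.
Qed.

End measure_of_balls.

Unset Implicit Arguments.

Theorem theorem2p4 (d : measure_display) (R : realType) (X : measurableType d)
  (dist : X -> X -> R) (mu : probability X R) (T : X -> X) :
  is_metric dist ->
  (* mu is a Borel measure: the sigma-algebra is generated by the open sets *)
  @measurable d X = <<s [set A | metric_open dist A] >> ->
  (* no atoms *)
  (forall x : X, mu [set x] = 0%E) ->
  measurable_fun setT T ->
  (forall A, measurable A -> mu (T @^-1` A) = mu A) ->
  (* (i) open balls *)
  ((forall (y : X) (r : nat -> R), (forall k, 0 < r k) ->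
      (forall k, oball dist y (r k.+1) `<=` oball dist y (r k)) ->
      (\sum_(0 <= k <oo) mu (oball dist y (r k)) = +oo)%E ->
      mu (limsup_preim T (fun k => oball dist y (r k))) = 1%E) ->
   forall y : X, (forall r, 0 < r -> (0 < mu (oball dist y r))%E) ->
   {ae mu, forall x,
      limf_einf (fun r => hratio T mu (oball dist y r) x) (0^'+) = 1%E})
  /\
  (* (ii) closed balls *)
  ((forall (y : X) (r : nat -> R), (forall k, 0 < r k) ->
      (forall k, cball dist y (r k.+1) `<=` cball dist y (r k)) ->
      (\sum_(0 <= k <oo) mu (cball dist y (r k)) = +oo)%E ->
      SBC T mu (fun k => cball dist y (r k))) ->
   forall y : X, (forall r, 0 < r -> (0 < mu (cball dist y r))%E) ->
   {ae mu, forall x,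
      hratio T mu (cball dist y r) x @[r --> 0^'+] --> 1%E}).
Proof.
move=> dist_metric borel atomless mT T_preserving.
have ball_limits y (B : R -> set X) : (forall r, measurable (B r)) ->
    (forall r s, r <= s -> B r `<=` B s) ->
    (forall r, oball dist y r `<=` B r) -> (forall r, B r `<=` cball dist y r) ->
    (forall e, 0 < e -> exists2 r, 0 < r & (mu (B r) < e%:E)%E) /\
    (forall e, e < 1 -> exists r, (e%:E < mu (B r))%E).
  move=> mB le_B oB Bc; split; last exact: measure_large_balls mB le_B (bigcup_balls oB).
  exact: (measure_small_balls mB le_B (bigcap_balls dist_metric oB Bc) (atomless y)).
split=> [limsup1 y muB_gt0|sbc y muB_gt0].
- have mB := measurable_oball dist_metric borel y.
  have le_B r s : r <= s -> oball dist y r `<=` oball dist y s by move=> rs x /lt_le_trans; apply.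
  have [small large] := ball_limits y _ mB le_B (fun r => @subset_refl _ _) (fun r x xr => ltW xr).
  exact: ae_liminf_hratio mB le_B muB_gt0 small large mT T_preserving (limsup1 y).
- have mB := measurable_cball dist_metric borel y.
  have le_B r s : r <= s -> cball dist y r `<=` cball dist y s by move=> rs x /le_trans; apply.
  have [small large] := ball_limits y _ mB le_B (fun r x xr => ltW xr) (fun r => @subset_refl _ _).
  exact: ae_lim_hratio mB le_B muB_gt0 small large mT T_preserving (cball_rcont dist y) (sbc y).
Qed.
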